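(* Let $\mathcal A_1,\mathcal A_2,\dots,\mathcal A_d\subset 2^{[n]}$ be pairwise cross-IU, i.e. for all $i\neq j$ and all $A\in\mathcal A_i$, $B\in\mathcal A_j$ we have $A\cap B\neq\emptyset$ and $A\cup B\neq[n]$. Then $$\sum_{i=1}^d|\mathcal A_i|\le\max\{2^n,\ d\cdot 2^{n-2}\}.$$
   Context: $[n]=\{1,\dots,n\}$ and $2^{[n]}$ is its power set. *)

From mathcomp Require Import all_boot.
Set Implicit Arguments. Unset Strict Implicit. Unset Printing Implicit Defensive.

(* [n] is modelled as the finite type 'I_n; subsets of [n] are {set 'I_n};
   a family A ⊂ 2^[n] is a {set {set 'I_n}}. *)

Definition cross_IU (n : nat) (F G : {set {set 'I_n}}) : Prop :=
  forall A B, A \in F -> B \in G -> A :&: B != set0 /\ A :|: B != [set: 'I_n].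

(* Let W be the sets lying in at least two of the families and V those lying
   in at least one; then sum_i |A_i| <= (d-1)|W| + |V|, and W is cross-IU with
   V.  Let U and D be the up- and down-closures of W.  Since W is intersecting,
   U contains no pair of complementary sets, so |U| <= 2^(n-1); dually
   |D| <= 2^(n-1).  The Harris-Kleitman inequality 2^n |U :&: D| <= |U| |D| then
   gives 2|U :&: D| <= |U| and 2|U :&: D| <= |D|, hence
   |U :|: D| >= 3|U :&: D| >= 3|W|.  No member of V is the complement of a
   member of U :|: D, so 3|W| + |V| <= 2^n, and the bound follows by comparing
   d with 4. *)

From mathcomp Require Import all_boot zify.
Set Implicit Arguments. Unset Strict Implicit. Unset Printing Implicit Defensive.

Section Slices.

Variable T : finType.
Implicit Types (F U D : {set {set T}}) (G : {set T}).

Definition up_closed_in G U :=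
  forall X Y : {set T}, X \in U -> X \subset Y -> Y \subset G -> Y \in U.

Definition down_closed D := forall X Y : {set T}, X \in D -> Y \subset X -> Y \in D.

Variable x : T.

Definition slice_out F := [set X in F | x \notin X].
Definition slice_in F := [set X : {set T} | (x \notin X) && (x |: X \in F)].

Lemma card_slices F : #|F| = #|slice_out F| + #|slice_in F|.
Proof.
rewrite -(cardsID [set X : {set T} | x \in X] F) addnC; congr (_ + _).
  by apply: eq_card => X; rewrite !inE andbC.
have -> : F :&: [set X : {set T} | x \in X] = (fun X => x |: X) @: slice_in F.
  apply/setP => Y; rewrite !inE; apply/andP/imsetP => [[YF xY]|[X]].
    by exists (Y :\ x); rewrite ?inE setD1K ?eqxx.
  by rewrite inE => /andP[_ XF] ->; rewrite XF !inE eqxx.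
apply: card_in_imset => X Y; rewrite !inE => /andP[xX _] /andP[xY _] eXY.
by rewrite -(setU1K xX) -(setU1K xY) eXY.
Qed.

Lemma slice_outI F1 F2 : slice_out (F1 :&: F2) = slice_out F1 :&: slice_out F2.
Proof. by apply/setP => X; rewrite !inE andbACA andbb. Qed.

Lemma slice_inI F1 F2 : slice_in (F1 :&: F2) = slice_in F1 :&: slice_in F2.
Proof. by apply/setP => X; rewrite !inE andbACA andbb. Qed.

Lemma slice_out_powerset G F :
  F \subset powerset G -> slice_out F \subset powerset (G :\ x).
Proof.
move/subsetP=> sFG; apply/subsetP => X; rewrite !inE => /andP[XF xX].
by rewrite subsetD1 -powersetE sFG.
Qed.

Lemma slice_in_powerset G F :
  F \subset powerset G -> slice_in F \subset powerset (G :\ x).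
Proof.
move/subsetP=> sFG; apply/subsetP => X; rewrite !inE => /andP[xX XF].
by rewrite subsetD1 xX andbT (subset_trans (subsetUr [set x] X)) // -powersetE sFG.
Qed.

Lemma up_closed_slice_out G U : up_closed_in G U -> up_closed_in (G :\ x) (slice_out U).
Proof.
move=> upU X Y; rewrite !inE subsetD1 => /andP[XU _] sXY /andP[sYG ->].
by rewrite (upU X).
Qed.

Lemma down_closed_slice_out D : down_closed D -> down_closed (slice_out D).
Proof.
move=> dnD X Y; rewrite !inE => /andP[XD xX] sYX.
by rewrite (dnD X) //= (contra (subsetP sYX x)).
Qed.

Lemma down_closed_slice_in D : down_closed D -> down_closed (slice_in D).
Proof.
move=> dnD X Y; rewrite !inE => /andP[xX XD] sYX.
by rewrite (contra (subsetP sYX x)) // (dnD (x |: X)) ?setUS.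
Qed.

Lemma slice_in_sub_out D : down_closed D -> slice_in D \subset slice_out D.
Proof.
move=> dnD; apply/subsetP => X; rewrite !inE => /andP[xX XD].
by rewrite xX andbT (dnD (x |: X)) ?subsetUr.
Qed.

Variable G : {set T}.
Hypothesis xG : x \in G.

Lemma up_closed_slice_in U : up_closed_in G U -> up_closed_in (G :\ x) (slice_in U).
Proof.
move=> upU X Y; rewrite !inE subsetD1 => /andP[_ XU] sXY /andP[sYG ->] /=.
by apply: (upU (x |: X)); rewrite ?setUS // subUset sub1set xG.
Qed.

Lemma slice_out_sub_in U :
  U \subset powerset G -> up_closed_in G U -> slice_out U \subset slice_in U.
Proof.
move/subsetP=> sUG upU; apply/subsetP => X; rewrite !inE => /andP[XU ->] /=.
have sXG : X \subset G by rewrite -powersetE sUG.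
by rewrite (upU X) ?subsetUr // subUset sub1set xG.
Qed.

End Slices.

Lemma leq_double_mul_rearrange p a0 a1 u0 u1 d0 d1 :
  p * a0 <= u0 * d0 -> p * a1 <= u1 * d1 -> u0 <= u1 -> d1 <= d0 ->
  2 * p * (a0 + a1) <= (u0 + u1) * (d0 + d1).
Proof. nia. Qed.

(* The ground set G is explicit so that the induction can remove one point. *)
Lemma kleitman_in (T : finType) (G : {set T}) (U D : {set {set T}}) :
  U \subset powerset G -> D \subset powerset G ->
  up_closed_in G U -> down_closed D ->
  2 ^ #|G| * #|U :&: D| <= #|U| * #|D|.
Proof.
move Gk: #|G| => k; elim: k G Gk U D => [|k IH] G Gk U D sUG sDG upU dnD.
  have := subset_leq_card (subsetIl U D); have := subset_leq_card (subsetIr U D).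
  nia.
have [x xG] : exists x, x \in G by apply/card_gt0P; rewrite Gk.
have Gxk : #|G :\ x| = k by apply/succn_inj; rewrite -Gk (cardsD1 x G) xG.
rewrite (card_slices x U) (card_slices x D) (card_slices x (U :&: D)).
rewrite slice_outI slice_inI expnS.
apply: leq_double_mul_rearrange.
- apply: IH Gxk _ _ (slice_out_powerset x sUG) (slice_out_powerset x sDG) _ _.
    exact: up_closed_slice_out.
  exact: down_closed_slice_out.
- apply: IH Gxk _ _ (slice_in_powerset x sUG) (slice_in_powerset x sDG) _ _.
    exact: up_closed_slice_in.
  exact: down_closed_slice_in.
- exact/subset_leq_card/(slice_out_sub_in xG sUG upU).
- exact/subset_leq_card/(slice_in_sub_out x dnD).
Qed.

Lemma kleitman (T : finType) (U D : {set {set T}}) :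
  up_closed_in setT U -> down_closed D -> 2 ^ #|T| * #|U :&: D| <= #|U| * #|D|.
Proof.
have sub_powersetT (F : {set {set T}}) : F \subset powerset setT.
  by apply/subsetP => X _; rewrite powersetE subsetT.
by rewrite -cardsT; apply: kleitman_in.
Qed.

Section Closures.

Variable T : finType.
Implicit Types (F W V : {set {set T}}).

Lemma card_complement_disjoint F1 F2 :
  {in F1, forall Y, ~: Y \notin F2} -> #|F1| + #|F2| <= 2 ^ #|T|.
Proof.
move=> F1F2; have dF : [disjoint [set ~: Y | Y in F1] & F2].
  rewrite -setI_eq0; apply/eqP/setP => Z; rewrite !inE.
  by apply/andP => -[/imsetP[Y YF1 ->]]; apply/negP/F1F2.
rewrite -(card_imset F1 (@setC_inj T)) -cardsUI (disjoint_setI0 dF) cards0 addn0.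
rewrite -cardsT -card_powerset.
by apply/subset_leq_card/subsetP => X _; rewrite powersetE subsetT.
Qed.

Lemma card_complement_free F : {in F, forall Y, ~: Y \notin F} -> 2 * #|F| <= 2 ^ #|T|.
Proof. by rewrite mul2n -addnn; apply: card_complement_disjoint. Qed.

Definition upset W := [set Y : {set T} | [exists X in W, X \subset Y]].
Definition downset W := [set Y : {set T} | [exists X in W, Y \subset X]].

Lemma upset_up_closed W : up_closed_in setT (upset W).
Proof.
move=> X Y; rewrite !inE => /existsP[Z /andP[ZW sZX]] sXY _.
by apply/existsP; exists Z; rewrite ZW (subset_trans sZX sXY).
Qed.

Lemma downset_down_closed W : down_closed (downset W).
Proof.
move=> X Y; rewrite !inE => /existsP[Z /andP[ZW sXZ]] sYX.
by apply/existsP; exists Z; rewrite ZW (subset_trans sYX sXZ).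
Qed.

Lemma sub_upset_downset W : W \subset upset W :&: downset W.
Proof.
apply/subsetP => X XW; rewrite !inE.
by apply/andP; split; apply/existsP; exists X; rewrite XW subxx.
Qed.

Lemma upset_complement_free W :
  {in W &, forall X Y, X :&: Y != set0} -> {in upset W, forall Y, ~: Y \notin upset W}.
Proof.
move=> meetW Y; rewrite !inE => /existsP[X /andP[XW sXY]].
apply/existsP => -[X' /andP[X'W sX'Y]].
move/negP: (meetW X X' XW X'W); apply; rewrite -subset0 -(setICr Y).
exact: setISS.
Qed.

Lemma downset_complement_free W :
  {in W &, forall X Y, X :|: Y != setT} -> {in downset W, forall Y, ~: Y \notin downset W}.
Proof.
move=> coverW Y; rewrite !inE => /existsP[X /andP[XW sYX]].
apply/existsP => -[X' /andP[X'W sYX']].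
move/negP: (coverW X X' XW X'W); apply; rewrite eqEsubset subsetT -(setUCr Y).
exact: setUSS.
Qed.

Lemma closures_complement_disjoint W V :
  {in W & V, forall X Y, X :&: Y != set0 /\ X :|: Y != setT} ->
  {in upset W :|: downset W, forall Y, ~: Y \notin V}.
Proof.
move=> crossWV Y; rewrite !inE => /orP[] /existsP[X /andP[XW sXY]];
  apply/negP => /(crossWV X _ XW) [meetXY coverXY].
  by move/negP: meetXY; apply; rewrite -subset0 -(setICr Y) setSI.
by move/negP: coverXY; apply; rewrite eqEsubset subsetT -(setUCr Y) setSU.
Qed.

End Closures.

Lemma leq_quadruple_common N a u d :
  0 < N -> N * a <= u * d -> 2 * u <= N -> 2 * d <= N -> 4 * a <= u + d.
Proof.
move=> N_gt0 Nad uN dN.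
have a_u : 2 * a <= u by rewrite -(leq_pmul2l N_gt0); nia.
have a_d : 2 * a <= d by rewrite -(leq_pmul2l N_gt0); nia.
lia.
Qed.

Lemma cross_IU_sub_bound n (W V : {set {set 'I_n}}) :
  W \subset V -> cross_IU W V -> 3 * #|W| + #|V| <= 2 ^ n.
Proof.
move=> sWV crossWV; set U := upset W; set D := downset W.
have meetW : {in W &, forall X Y, X :&: Y != set0}.
  by move=> X Y XW /(subsetP sWV)/(crossWV X _ XW)[].
have coverW : {in W &, forall X Y, X :|: Y != setT}.
  by move=> X Y XW /(subsetP sWV)/(crossWV X _ XW)[].
have kl : 2 ^ n * #|U :&: D| <= #|U| * #|D|.
  have := kleitman (upset_up_closed (W := W)) (downset_down_closed (W := W)).
  by rewrite card_ord.
have cU : 2 * #|U| <= 2 ^ n.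
  by have := card_complement_free (upset_complement_free meetW); rewrite card_ord.
have cD : 2 * #|D| <= 2 ^ n.
  by have := card_complement_free (downset_complement_free coverW); rewrite card_ord.
have cV : #|U :|: D| + #|V| <= 2 ^ n.
  by have := card_complement_disjoint (closures_complement_disjoint crossWV); rewrite card_ord.
have cUD : #|W| <= #|U :&: D| := subset_leq_card (sub_upset_downset W).
have := leq_quadruple_common (expn_gt0 2 n) kl cU cD.
have := cardsUI U D.
lia.
Qed.

Section Multiplicity.

Variables (I T : finType) (A : I -> {set T}).

Definition multiplicity (x : T) := #|[set i | x \in A i]|.

Lemma sum_card_multiplicity : \sum_i #|A i| = \sum_x multiplicity x.
Proof.
under eq_bigr do rewrite -sum1_card.
rewrite (exchange_big_dep predT) //=; apply: eq_bigr => x _.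
by rewrite sum1dep_card.
Qed.

Lemma sum_multiplicity_le :
  \sum_x multiplicity x <=
    #|I|.-1 * #|[set x | 1 < multiplicity x]| + #|[set x | 0 < multiplicity x]|.
Proof.
rewrite -!sum1dep_card big_distrr !(big_mkcond (fun x => _ < multiplicity x)) -big_split /=.
apply: leq_sum => x _; have := max_card [set i | x \in A i]; rewrite -/(multiplicity x).
by case: (multiplicity x) => [|[|m]] //=; lia.
Qed.

End Multiplicity.

Lemma cross_IU_multiplicity n d (A : 'I_d -> {set {set 'I_n}}) :
  (forall i j : 'I_d, i != j -> cross_IU (A i) (A j)) ->
  cross_IU [set X | 1 < multiplicity A X] [set X | 0 < multiplicity A X].
Proof.
move=> crossA X Y; rewrite !inE => mX /card_gt0P[j] /[!inE] YAj.
have /card_gt0P[i] : 0 < #|[set i | X \in A i] :\ j|.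
  by move: mX; rewrite /multiplicity (cardsD1 j); lia.
by rewrite !inE => /andP[ij XAi]; apply: crossA ij X Y XAi YAj.
Qed.

Lemma leq_max_bound d w v N :
  w <= v -> 3 * w + v <= N -> 4 * (d.-1 * w + v) <= maxn (4 * N) (d * N).
Proof.
move=> le_wv le_N; case: (leqP d 4) => [le_d4 | lt4d].
  by apply: leq_trans (leq_maxl _ _); nia.
by apply: leq_trans (leq_maxr _ _); nia.
Qed.

Theorem theorem1p10 (n d : nat) (A : 'I_d -> {set {set 'I_n}}) :
  (forall i j : 'I_d, i != j -> cross_IU (A i) (A j)) ->
  4 * (\sum_(i < d) #|A i|) <= maxn (4 * 2 ^ n) (d * 2 ^ n).
Proof.
move=> crossA; set W := [set X | 1 < multiplicity A X].
set V := [set X | 0 < multiplicity A X].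
have sWV : W \subset V by apply/subsetP => X; rewrite !inE; apply: ltnW.
have cWV : 3 * #|W| + #|V| <= 2 ^ n.
  exact: cross_IU_sub_bound sWV (cross_IU_multiplicity crossA).
apply: leq_trans (leq_max_bound d (subset_leq_card sWV) cWV).
by rewrite leq_mul2l sum_card_multiplicity -{2}(card_ord d) sum_multiplicity_le orbT.
Qed.
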